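(* Let $\overline Y$ be a balanced real random variable whose support has at most two points, and let $y_1,y_2$ be independent copies of $\overline Y$. Then for all real numbers $x_1,x_2$, \[ \mathbb{E}_{y_1,y_2}\big(|x_1+y_1|-|x_2+y_2|\big)^2 \;\ge\; \frac14\big(|x_1|-|x_2|\big)^2 . \]
   Context: A random variable is balanced if it has expectation $0$. *)

From Stdlib Require Import Reals.
Open Scope R_scope.

(* A real random variable whose support has at most two points is described by
   its law: value [a] with probability [p] and value [b] with probability [1-p],
   where 0 <= p <= 1 (a = b, p = 0 or p = 1 cover one-point supports). *)
Record two_point_law := TPL { tp_a : R; tp_b : R; tp_p : R }.

Definition valid_law (Y : two_point_law) : Prop :=
  0 <= tp_p Y <= 1.

Definition expect (Y : two_point_law) (f : R -> R) : R :=
  tp_p Y * f (tp_a Y) + (1 - tp_p Y) * f (tp_b Y).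

Definition balanced (Y : two_point_law) : Prop :=
  expect Y (fun y => y) = 0.

(* expectation of g(y1,y2) for y1,y2 independent copies of Y
   (law of the pair is the product law) *)
Definition expect2 (Y : two_point_law) (g : R -> R -> R) : R :=
  expect Y (fun y1 => expect Y (fun y2 => g y1 y2)).

From Stdlib Require Import Reals Lra Psatz.
Open Scope R_scope.

(* Write the balanced law as the values (1-p)t and -pt, t >= 0, and f_i y := |x_i + y|.
   Since y1, y2 are independent, E (f_1 y1 - f_2 y2)^2 = (E f_1 - E f_2)^2 + Var f_1 + Var f_2,
   where Var f_i = p(1-p) e_i^2 with e_i = f_i((1-p)t) - f_i(-pt), and E f_i = |x_i| + g(e_i)
   for the Jensen gap g(e) = min((1-p)(t-e), p(t+e)).  A case analysis on the two branches of
   the minimum gives (g(e_1) - g(e_2))^2 <= 3 p(1-p)(e_1^2 + e_2^2), and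
   min_d ((D + d)^2 + d^2/3) = D^2/4 with D = |x_1| - |x_2|. *)

Definition swap_law (Y : two_point_law) : two_point_law :=
  TPL (tp_b Y) (tp_a Y) (1 - tp_p Y).

Lemma expect_swap_law Y f : expect (swap_law Y) f = expect Y f.
Proof. unfold expect; simpl; ring. Qed.

Lemma expect2_swap_law Y g : expect2 (swap_law Y) g = expect2 Y g.
Proof. unfold expect2, expect; simpl; ring. Qed.

Lemma valid_swap_law Y : valid_law Y -> valid_law (swap_law Y).
Proof. unfold valid_law; simpl; lra. Qed.

Lemma balanced_swap_law Y : balanced Y -> balanced (swap_law Y).
Proof. unfold balanced; now rewrite expect_swap_law. Qed.

Lemma expect2_sq_diff Y f g :
  expect2 Y (fun y1 y2 => (f y1 - g y2) ^ 2) =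
  (expect Y f - expect Y g) ^ 2 +
  tp_p Y * (1 - tp_p Y) *
    ((f (tp_a Y) - f (tp_b Y)) ^ 2 + (g (tp_a Y) - g (tp_b Y)) ^ 2).
Proof. unfold expect2, expect; ring. Qed.

Lemma balanced_values Y : balanced Y ->
  tp_a Y = (1 - tp_p Y) * (tp_a Y - tp_b Y) /\ tp_b Y = - tp_p Y * (tp_a Y - tp_b Y).
Proof. unfold balanced, expect; intros; split; lra. Qed.

Definition jensen_gap (p t e : R) : R := Rmin ((1 - p) * (t - e)) (p * (t + e)).

Lemma jensen_gap_sym p t e : jensen_gap (1 - p) t (- e) = jensen_gap p t e.
Proof.
  unfold jensen_gap; rewrite Rmin_comm.
  f_equal; ring.
Qed.

Lemma jensen_gap_left p t e : t * (1 - 2 * p) <= e -> jensen_gap p t e = (1 - p) * (t - e).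
Proof. intros; unfold jensen_gap; apply Rmin_left; lra. Qed.

Lemma jensen_gap_right p t e : e <= t * (1 - 2 * p) -> jensen_gap p t e = p * (t + e).
Proof. intros; unfold jensen_gap; apply Rmin_right; lra. Qed.

Lemma expect_abs_shift p t x : 0 <= p <= 1 -> 0 <= t ->
  p * Rabs (x + (1 - p) * t) + (1 - p) * Rabs (x + - p * t) =
  Rabs x + jensen_gap p t (Rabs (x + (1 - p) * t) - Rabs (x + - p * t)).
Proof.
  intros Hp Ht.
  assert (0 <= p * t) by nra.
  assert (0 <= (1 - p) * t) by nra.
  unfold jensen_gap, Rmin; destruct Rle_dec;
    unfold Rabs in *; repeat destruct Rcase_abs; nra.
Qed.

Lemma Rabs_diff_between u v : - Rabs (u - v) <= Rabs u - Rabs v <= Rabs (u - v).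
Proof.
  split.
  - rewrite Rabs_minus_sym; generalize (Rabs_triang_inv v u); lra.
  - apply Rabs_triang_inv.
Qed.

(* Both gaps on the branch (1-p)(t-e), after cancelling a factor 1-p. *)
Lemma left_branch_ineq p t e1 e2 : 0 <= p <= 1 -> 0 <= t ->
  e1 <= t -> e2 <= t -> t * (1 - 2 * p) <= e1 -> t * (1 - 2 * p) <= e2 ->
  (1 - p) * (e2 - e1) ^ 2 <= 3 * p * (e1 ^ 2 + e2 ^ 2).
Proof.
  intros Hp Ht He1 He2 Hs1 Hs2.
  destruct (Rle_dec (2 / 5) p).
  { assert (0 <= (1 - p) * (e1 + e2) ^ 2) by (apply Rmult_le_pos; [lra | apply pow2_ge_0]).
    nra. }
  assert (0 <= t * (1 - 2 * p)) by nra.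
  destruct (Rle_dec (1 / 4) p).
  - assert (0 <= e1 * e2) by nra.
    nra.
  - assert (close : (e2 - e1) ^ 2 <= (2 * p * t) ^ 2).
    { assert (0 <= (2 * p * t - (e2 - e1)) * (2 * p * t + (e2 - e1)))
        by (apply Rmult_le_pos; lra).
      nra. }
    assert (far : 2 * ((1 - 2 * p) * t) ^ 2 <= e1 ^ 2 + e2 ^ 2) by nra.
    assert (4 * (1 - p) * p ^ 2 <= 6 * p * (1 - 2 * p) ^ 2) by nra.
    assert (0 <= t ^ 2) by nra.
    nra.
Qed.

(* Gaps on opposite branches: bounds the (1-p)-branch term; reflecting p and e gives the p-branch term. *)
Lemma straddle_ineq p t e1 e2 : 0 <= p <= 1 ->
  e1 <= t -> - t <= e2 -> e2 <= t * (1 - 2 * p) <= e1 ->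
  (1 - p) * (e1 - t * (1 - 2 * p)) ^ 2 <= 3 * p * (e1 ^ 2 + e2 ^ 2).
Proof.
  intros Hp He1 He2 Hs.
  set (s := t * (1 - 2 * p)) in *.
  destruct (Rle_dec (1 / 2) p).
  { assert (s <= 0) by (unfold s; nra).
    assert (s ^ 2 <= e2 ^ 2) by nra.
    assert (0 <= (1 - p) * (e1 + s) ^ 2) by (apply Rmult_le_pos; [lra | apply pow2_ge_0]).
    nra. }
  assert (0 <= s) by (unfold s; nra).
  assert (0 <= 3 * p * e2 ^ 2) by (generalize (pow2_ge_0 e2); nra).
  destruct (Rle_dec (1 / 4) p).
  - assert ((e1 - s) ^ 2 <= e1 ^ 2) by nra.
    nra.
  - assert (e1 - s <= 2 * p * t) by (unfold s; lra).
    assert (2 * (1 - p) * t <= 3 * e1) by (unfold s in *; nra).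
    assert ((e1 - s) ^ 2 <= (2 * p * t) * e1) by nra.
    assert ((1 - p) * (e1 - s) ^ 2 <= (1 - p) * ((2 * p * t) * e1))
      by (apply Rmult_le_compat_l; lra).
    assert (p * e1 * (2 * (1 - p) * t) <= p * e1 * (3 * e1))
      by (apply Rmult_le_compat_l; nra).
    nra.
Qed.

Lemma jensen_gap_diff_straddle p t e1 e2 : 0 <= p <= 1 ->
  - t <= e1 <= t -> - t <= e2 <= t -> e2 <= t * (1 - 2 * p) <= e1 ->
  (jensen_gap p t e1 - jensen_gap p t e2) ^ 2 <= 3 * (p * (1 - p)) * (e1 ^ 2 + e2 ^ 2).
Proof.
  intros Hp He1 He2 Hs.
  rewrite (jensen_gap_left p t e1), (jensen_gap_right p t e2) by lra.
  set (A := (1 - p) * (e1 - t * (1 - 2 * p))).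
  set (B := p * (t * (1 - 2 * p) - e2)).
  assert (0 <= A) by (apply Rmult_le_pos; lra).
  assert (0 <= B) by (apply Rmult_le_pos; lra).
  replace ((1 - p) * (t - e1) - p * (t + e2)) with (B - A) by (unfold A, B; ring).
  assert (HA : A ^ 2 <= 3 * (p * (1 - p)) * (e1 ^ 2 + e2 ^ 2)).
  { assert ((1 - p) * ((1 - p) * (e1 - t * (1 - 2 * p)) ^ 2) <=
            (1 - p) * (3 * p * (e1 ^ 2 + e2 ^ 2)))
      by (apply Rmult_le_compat_l; [lra | apply straddle_ineq; lra]).
    unfold A; nra. }
  assert (HB : B ^ 2 <= 3 * (p * (1 - p)) * (e1 ^ 2 + e2 ^ 2)).
  { assert (p * ((1 - (1 - p)) * (- e2 - t * (1 - 2 * (1 - p))) ^ 2) <=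
            p * (3 * (1 - p) * ((- e2) ^ 2 + (- e1) ^ 2)))
      by (apply Rmult_le_compat_l; [lra | apply straddle_ineq; lra]).
    unfold B; nra. }
  destruct (Rle_dec A B); nra.
Qed.

Lemma jensen_gap_diff_left_branch p t e1 e2 : 0 <= p <= 1 -> 0 <= t ->
  e1 <= t -> e2 <= t -> t * (1 - 2 * p) <= e1 -> t * (1 - 2 * p) <= e2 ->
  (jensen_gap p t e1 - jensen_gap p t e2) ^ 2 <= 3 * (p * (1 - p)) * (e1 ^ 2 + e2 ^ 2).
Proof.
  intros Hp Ht He1 He2 Hs1 Hs2.
  rewrite !jensen_gap_left by lra.
  assert ((1 - p) * ((1 - p) * (e2 - e1) ^ 2) <= (1 - p) * (3 * p * (e1 ^ 2 + e2 ^ 2)))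
    by (apply Rmult_le_compat_l; [lra | apply (left_branch_ineq p t); lra]).
  nra.
Qed.

Lemma jensen_gap_diff_sq_le p t e1 e2 : 0 <= p <= 1 ->
  - t <= e1 <= t -> - t <= e2 <= t ->
  (jensen_gap p t e1 - jensen_gap p t e2) ^ 2 <= 3 * (p * (1 - p)) * (e1 ^ 2 + e2 ^ 2).
Proof.
  intros Hp.
  enough (H : forall e1 e2, - t <= e1 <= t -> - t <= e2 <= t -> e2 <= e1 ->
            (jensen_gap p t e1 - jensen_gap p t e2) ^ 2 <=
            3 * (p * (1 - p)) * (e1 ^ 2 + e2 ^ 2)).
  { intros He1 He2; destruct (Rle_dec e2 e1); [now apply H |].
    replace ((jensen_gap p t e1 - jensen_gap p t e2) ^ 2)
      with ((jensen_gap p t e2 - jensen_gap p t e1) ^ 2) by ring.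
    replace (e1 ^ 2 + e2 ^ 2) with (e2 ^ 2 + e1 ^ 2) by ring.
    apply H; lra. }
  intros u v Hu Hv Huv.
  destruct (Rle_dec (t * (1 - 2 * p)) v); [apply jensen_gap_diff_left_branch; lra |].
  destruct (Rle_dec (t * (1 - 2 * p)) u); [apply jensen_gap_diff_straddle; lra |].
  (* both on the right branch: reflect p to 1 - p and e to - e *)
  rewrite <- (jensen_gap_sym p t u), <- (jensen_gap_sym p t v).
  replace (3 * (p * (1 - p)) * (u ^ 2 + v ^ 2))
    with (3 * ((1 - p) * (1 - (1 - p))) * ((- u) ^ 2 + (- v) ^ 2)) by ring.
  apply jensen_gap_diff_left_branch; lra.
Qed.

Lemma quarter_le_sq_add_third D d : / 4 * D ^ 2 <= (D + d) ^ 2 + d ^ 2 / 3.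
Proof.
  assert (E : (D + d) ^ 2 + d ^ 2 / 3 - / 4 * D ^ 2 = 3 / 4 * (D + 4 / 3 * d) ^ 2) by field.
  generalize (pow2_ge_0 (D + 4 / 3 * d)); lra.
Qed.

Lemma expect2_abs_sq_diff_ge p t x1 x2 : 0 <= p <= 1 -> 0 <= t ->
  expect2 (TPL ((1 - p) * t) (- p * t) p)
    (fun y1 y2 => (Rabs (x1 + y1) - Rabs (x2 + y2)) ^ 2)
  >= / 4 * (Rabs x1 - Rabs x2) ^ 2.
Proof.
  intros Hp Ht.
  rewrite (expect2_sq_diff _ (fun y => Rabs (x1 + y)) (fun y => Rabs (x2 + y))).
  unfold expect; simpl.
  rewrite !expect_abs_shift by assumption.
  set (e1 := Rabs (x1 + (1 - p) * t) - Rabs (x1 + - p * t)).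
  set (e2 := Rabs (x2 + (1 - p) * t) - Rabs (x2 + - p * t)).
  assert (Hbound : forall x, - t <= Rabs (x + (1 - p) * t) - Rabs (x + - p * t) <= t).
  { intro x.
    pose proof (Rabs_diff_between (x + (1 - p) * t) (x + - p * t)) as H.
    replace (x + (1 - p) * t - (x + - p * t)) with t in H by ring.
    now rewrite Rabs_pos_eq in H. }
  assert (Hgap := jensen_gap_diff_sq_le p t e1 e2 Hp (Hbound x1) (Hbound x2)).
  generalize (quarter_le_sq_add_third (Rabs x1 - Rabs x2)
                (jensen_gap p t e1 - jensen_gap p t e2)).
  nra.
Qed.

Lemma expect2_abs_sq_diff_ge_ordered Y x1 x2 :
  valid_law Y -> balanced Y -> tp_b Y <= tp_a Y ->
  expect2 Y (fun y1 y2 => (Rabs (x1 + y1) - Rabs (x2 + y2)) ^ 2)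
  >= / 4 * (Rabs x1 - Rabs x2) ^ 2.
Proof.
  intros hY hbal Hab.
  destruct (balanced_values Y hbal) as [Ea Eb].
  destruct Y as [a b p]; simpl in *.
  set (t := a - b) in Ea, Eb.
  rewrite Ea, Eb.
  apply expect2_abs_sq_diff_ge; [exact hY | unfold t; lra].
Qed.

Theorem claim8 (Y : two_point_law) (hY : valid_law Y) (hbal : balanced Y)
  (x1 x2 : R) :
  expect2 Y (fun y1 y2 => (Rabs (x1 + y1) - Rabs (x2 + y2)) ^ 2)
    >= / 4 * (Rabs x1 - Rabs x2) ^ 2.
Proof.
  destruct (Rle_dec (tp_b Y) (tp_a Y)).
  - now apply expect2_abs_sq_diff_ge_ordered.
  - rewrite <- expect2_swap_law.
    apply expect2_abs_sq_diff_ge_ordered;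
      [apply valid_swap_law | apply balanced_swap_law | simpl; lra]; assumption.
Qed.
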